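(* Let $S$ be a finite abelian semigroup with a zero element, its nonzero elements labelled $\lambda_i$, $i=0,\dots,N$, and $\lambda_{N+1}=0_S$; let $K_{i_1\cdots i_n}{}^{j}$ denote its $n$-selector restricted to indices $i_k,j\in\{0,\dots,N\}$. Let $\mathfrak g$ be a Lie superalgebra with basis $\{T_A\}$ and let $|T_{A_1}\cdots T_{A_n}|$ be an invariant tensor for $\mathfrak g$. Then for arbitrary constants $\alpha_j$, $$|T_{(A_1,i_1)}\cdots T_{(A_n,i_n)}|:=\sum_{j=0}^{N}\alpha_j K_{i_1\cdots i_n}{}^{j}\,|T_{A_1}\cdots T_{A_n}|$$ is an invariant tensor for the $0_S$-forced algebra obtained from $\mathfrak G=S\otimes\mathfrak g$.
   Context: A semigroup is a set with a closed associative multiplication; a zero element $0_S$ satisfies $0_S\lambda=\lambda0_S=0_S$ for all $\lambda\in S$. The $n$-selector $K_{\alpha_1\cdots\alpha_n}{}^{\gamma}$ equals $1$ if $\lambda_{\alpha_1}\cdots\lambda_{\alpha_n}=\lambda_\gamma$ and $0$ otherwise. If $\mathfrak g$ has basis $\{T_A\}$ with grading $\mathfrak q(A)$ and structure constants $C_{AB}{}^C$, the $0_S$-forced algebra of $S\otimes\mathfrak g$ is the vector space with basis $T_{(A,i)}$, $i=0,\dots,N$ (i.e. $\lambda_iT_A$ with the generators $0_ST_A$ set to zero), grading $\mathfrak q(A,i)=\mathfrak q(A)$ and bracket $[T_{(A,i)},T_{(B,j)}]=\sum_{k=0}^N K_{ij}{}^{k}C_{AB}{}^{C}T_{(C,k)}$.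 A rank-$n$ tensor $|T_{A_1}\cdots T_{A_n}|$ on a Lie superalgebra with structure constants $C_{AB}{}^C$ is invariant if for all $A_0,\dots,A_n$: $\sum_{p=1}^{n}(-1)^{\mathfrak q(A_0)(\mathfrak q(A_1)+\cdots+\mathfrak q(A_{p-1}))}C_{A_0A_p}{}^{B}|T_{A_1}\cdots T_{A_{p-1}}T_BT_{A_{p+1}}\cdots T_{A_n}|=0$. *)

From mathcomp Require Import all_boot all_order all_algebra.
Set Implicit Arguments. Unset Strict Implicit. Unset Printing Implicit Defensive.
Import GRing.Theory.
Local Open Scope ring_scope.

(* Nonzero elements of a semigroup S with zero z: these are the labels
   lambda_0, ..., lambda_N of the paper. *)
Definition nz (S : finType) (z : S) := {x : S | x != z}.

Definition sprod (S : Type) (mul : S -> S -> S) (s : seq S) : option S :=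
  match s with
  | [::] => None
  | x :: r => Some (foldl mul x r)
  end.

Definition selector (F : fieldType) (S : finType) (z : S) (mul : S -> S -> S)
    (n : nat) (ix : {ffun 'I_n -> nz z}) (j : nz z) : F :=
  (sprod mul [seq val (ix k) | k <- enum 'I_n] == Some (val j))%:R.

(* Lie superalgebra given by a basis indexed by I, Z2-grading q and
   structure constants C A B c = C_{AB}^c. *)
Definition is_lie_superalgebra (F : fieldType) (I : finType) (q : I -> bool)
    (C : I -> I -> I -> F) : Prop :=
  (forall A B c, C A B c = - ((-1) ^+ (q A * q B) * C B A c)) /\
  (forall A B c, C A B c != 0 -> q c = q A (+) q B) /\
  (forall A B c E,
     (-1) ^+ (q A * q c) * \sum_(D : I) C B c D * C A D E
   + (-1) ^+ (q B * q A) * \sum_(D : I) C c A D * C B D E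
   + (-1) ^+ (q c * q B) * \sum_(D : I) C A B D * C c D E = 0).

Definition upd (I : finType) (n : nat) (a : {ffun 'I_n -> I}) (p : 'I_n) (B : I)
  : {ffun 'I_n -> I} := [ffun k => if k == p then B else a k].

Definition invariant_tensor (F : fieldType) (I : finType) (q : I -> bool)
    (C : I -> I -> I -> F) (n : nat) (t : {ffun 'I_n -> I} -> F) : Prop :=
  forall (A0 : I) (a : {ffun 'I_n -> I}),
    \sum_(p < n) (-1) ^+ (q A0 * \sum_(k < n | (k < p)%N) q (a k))
                 * \sum_(B : I) C A0 (a p) B * t (upd a p B) = 0.

(* The 0_S-forced algebra of S (x) g: basis T_(A,i), i nonzero. *)
Definition forced_grading (I S : finType) (z : S) (q : I -> bool)
  : (I * nz z)%type -> bool := fun Ai => q Ai.1.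

Definition forced_consts (F : fieldType) (I S : finType) (z : S)
    (mul : S -> S -> S) (C : I -> I -> I -> F)
  : (I * nz z)%type -> (I * nz z)%type -> (I * nz z)%type -> F :=
  fun Ai Bj Ck =>
    ((mul (val Ai.2) (val Bj.2) == val Ck.2)%:R : F) * C Ai.1 Bj.1 Ck.1.

Definition forced_tensor (F : fieldType) (I S : finType) (z : S)
    (mul : S -> S -> S) (n : nat) (alpha : nz z -> F)
    (t : {ffun 'I_n -> I} -> F) (a : {ffun 'I_n -> (I * nz z)%type}) : F :=
  \sum_(j : nz z) alpha j * selector F mul [ffun k => (a k).2] j
                  * t [ffun k => (a k).1].

From mathcomp Require Import all_boot all_order all_algebra.
From mathcomp Require Import ring.
Import GRing.Theory.
Set Implicit Arguments. Unset Strict Implicit.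
Local Open Scope ring_scope.

(* Products of semigroup elements are computed in the commutative monoid
   [option S] obtained by adjoining a unit [None].  Summing over the label j'
   of the intermediate generator, K_{c i_p}^{j'} K_{i_1 .. j' .. i_n}^j
   collapses to K_{c i_1 .. i_n}^j: by associativity when c * i_p is nonzero,
   and because both sides vanish when c * i_p = 0_S, since 0_S absorbs the
   whole product.  Hence the invariance sum of the forced tensor at (A_0, c)
   is sum_j alpha_j K_{c i_1 .. i_n}^j times the invariance sum of the
   original tensor at A_0, which is zero. *)

Section SemigroupWithZero.
Variables (S : finType) (mul : S -> S -> S) (z : S).
Hypotheses (mulA : associative mul) (mulC : commutative mul)
    (mul0s : forall x, mul z x = z).

Local Notation oop := (oAC mulA mulC).

Definition ordprod n (g : 'I_n -> S) : option S :=
  \big[oop/None]_(k < n) Some (g k).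

Lemma foldl_mulA c x r : foldl mul (mul c x) r = mul c (foldl mul x r).
Proof. by elim: r x => [|y r IH] x //=; rewrite -mulA IH. Qed.

Lemma sprod_cons x r : sprod mul (x :: r) = oop (Some x) (sprod mul r).
Proof. by case: r => [|y r] //=; rewrite foldl_mulA. Qed.

Lemma sprod_big r : sprod mul r = \big[oop/None]_(x <- r) Some x.
Proof. by elim: r => [|x r IH]; rewrite ?big_nil ?big_cons ?sprod_cons ?IH. Qed.

Lemma sprod_ordprod n (g : 'I_n -> S) :
  sprod mul [seq g k | k <- enum 'I_n] = ordprod g.
Proof. by rewrite sprod_big big_map big_enum. Qed.

Lemma ordprod_mul_at n (g : 'I_n -> S) p c :
  ordprod (fun k => if k == p then mul c (g k) else g k) = oop (Some c) (ordprod g).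
Proof.
rewrite /ordprod [LHS](bigD1 p) // [in RHS](bigD1 p) //= eqxx Monoid.mulmA.
congr (oop _ _); apply: eq_bigr => k /negbTE -> //.
Qed.

Lemma ordprod_zero_at n (g : 'I_n -> S) p c :
  mul c (g p) = z -> oop (Some c) (ordprod g) = Some z.
Proof.
move=> cgz; rewrite -(ordprod_mul_at g p) /ordprod (bigD1 p) //= eqxx cgz.
by case: (\big[_/_]_(k | _) _) => [x|] //; rewrite oACE mul0s.
Qed.

End SemigroupWithZero.

Section Selector.
Variables (F : fieldType) (S : finType) (mul : S -> S -> S) (z : S).
Hypotheses (mulA : associative mul) (mulC : commutative mul)
    (mul0s : forall x, mul z x = z).

Local Notation oop := (oAC mulA mulC).
Local Notation ordprod := (ordprod mulA mulC).

Lemma selectorE n (ix : {ffun 'I_n -> nz z}) j :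
  selector F mul ix j = (ordprod (fun k => val (ix k)) == Some (val j))%:R.
Proof. by rewrite /selector (sprod_ordprod mulA mulC (fun k => val (ix k))). Qed.

Lemma sum_nz_indicator (y : S) (f : S -> F) :
  \sum_(j : nz z) (y == val j)%:R * f (val j) = (y != z)%:R * f y.
Proof.
have [-> | ynz] := eqVneq y z.
  by rewrite mul0r big1 // => j _; rewrite eq_sym (negbTE (valP j)) mul0r.
rewrite (bigD1 (exist _ y ynz)) //= eqxx !mul1r big1 ?addr0 // => j nej.
case: eqP => [yj|]; last by rewrite mul0r.
by case/eqP: nej; apply: val_inj.
Qed.

Lemma sum_selector_upd n (ix : {ffun 'I_n -> nz z}) p c j :
  \sum_(j' : nz z) (mul c (val (ix p)) == val j')%:R * selector F mul (upd ix p j') j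
  = (oop (Some c) (ordprod (fun k => val (ix k))) == Some (val j))%:R.
Proof.
pose f y := (ordprod (fun k => if k == p then y else val (ix k)) == Some (val j))%:R : F.
transitivity (\sum_(j' : nz z) (mul c (val (ix p)) == val j')%:R * f (val j')).
  apply: eq_bigr => j' _; rewrite selectorE /f.
  by congr (_ * (_ == _)%:R); apply: eq_bigr => k _; rewrite ffunE; case: eqP.
rewrite sum_nz_indicator /f.
have [cz | cnz] := eqVneq (mul c (val (ix p))) z.
  rewrite mul0r (ordprod_zero_at mulA mulC mul0s cz).
  by case: eqP => // -[zj]; case/negP: (valP j); rewrite /= -zj.
rewrite mul1r -(ordprod_mul_at mulA mulC (fun k => val (ix k)) p).
by congr (_ == _)%:R; apply: eq_bigr => k _; case: eqP => [->|].
Qed.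

End Selector.

Section ForcedTensor.
Variables (F : fieldType) (S : finType) (mul : S -> S -> S) (z : S).
Hypotheses (mulA : associative mul) (mulC : commutative mul)
    (mul0s : forall x, mul z x = z).
Variables (I : finType) (C : I -> I -> I -> F).
Variables (n : nat) (t : {ffun 'I_n -> I} -> F) (alpha : nz z -> F).

Local Notation oop := (oAC mulA mulC).
Local Notation ordprod := (ordprod mulA mulC).
Local Notation tensor := (forced_tensor mul alpha t).

Lemma upd_fst (a : {ffun 'I_n -> I * nz z}) p B :
  [ffun k => (upd a p B k).1] = upd [ffun k => (a k).1] p B.1.
Proof. by apply/ffunP => k; rewrite !ffunE; case: eqP. Qed.

Lemma upd_snd (a : {ffun 'I_n -> I * nz z}) p B :
  [ffun k => (upd a p B k).2] = upd [ffun k => (a k).2] p B.2.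
Proof. by apply/ffunP => k; rewrite !ffunE; case: eqP. Qed.

Lemma forced_action_at (a : {ffun 'I_n -> I * nz z}) A0 p :
  \sum_(B : I * nz z) forced_consts mul C A0 (a p) B * tensor (upd a p B)
  = (\sum_(j : nz z) alpha j *
       (oop (Some (val A0.2)) (ordprod (fun k => val (a k).2)) == Some (val j))%:R)
    * \sum_(b : I) C A0.1 (a p).1 b * t (upd [ffun k => (a k).1] p b).
Proof.
transitivity (\sum_(b : I) \sum_(j' : nz z)
    forced_consts mul C A0 (a p) (b, j') * tensor (upd a p (b, j'))).
  by rewrite pair_bigA; apply: eq_bigr => -[].
rewrite mulr_sumr; apply: eq_bigr => b _.
rewrite /forced_consts /tensor /forced_tensor.
under eq_bigr => j' _ do rewrite upd_fst upd_snd /=.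
under eq_bigr => j' _ do rewrite mulr_sumr.
rewrite exchange_big mulr_suml; apply: eq_bigr => j _.
have ordprod_snd : ordprod (fun k => val ([ffun k => (a k).2] k))
                   = ordprod (fun k => val (a k).2).
  by apply: eq_bigr => k _; rewrite ffunE.
rewrite -ordprod_snd -(sum_selector_upd F mulA mulC mul0s _ p) ffunE.
rewrite [in RHS]mulr_sumr [in RHS]mulr_suml; apply: eq_bigr => j' _.
by rewrite /=; ring.
Qed.

End ForcedTensor.

Theorem theorem4 (F : fieldType) (S : finType) (mul : S -> S -> S) (z : S)
    (mulA : associative mul) (mulC : commutative mul)
    (mul0s : forall x, mul z x = z) (muls0 : forall x, mul x z = z)
    (I : finType) (q : I -> bool) (C : I -> I -> I -> F)
    (hg : is_lie_superalgebra q C)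
    (n : nat) (t : {ffun 'I_n -> I} -> F)
    (ht : invariant_tensor q C t)
    (alpha : nz z -> F) :
  invariant_tensor (@forced_grading I S z q) (forced_consts mul C)
    (forced_tensor mul alpha t).
Proof.
move=> A0 a; set A := [ffun k => (a k).1].
under eq_bigr => p _ do rewrite (forced_action_at mulA mulC mul0s) mulrCA.
rewrite -mulr_sumr (_ : \sum_(p < n) _ = 0) ?mulr0 //.
rewrite -[RHS](ht A0.1 A); apply: eq_bigr => p _; rewrite ffunE.
by congr (_ ^+ (_ * _) * _); apply: eq_bigr => k _; rewrite ffunE.
Qed.
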